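(* For every finite metric space $(X,d)$, every $S\subseteq X$, every $p\in(0,1)$ and every $\tau>0$, there exists a $1$-Lipschitz map $\varphi:X\to L_2$ such that for every $x,y\in S$ with $d(x,y)\ge\tau$, $$\|\varphi(x)-\varphi(y)\|_2\ge \frac{\tau\sqrt p}{\zeta(S;p)}.$$
   Context: $L_2$ denotes a Hilbert space. For a finite metric space $(Y,d)$ (here $S$ with the restricted metric), given $\Delta,\zeta>0$ and $p\in(0,1)$, $Y$ admits a random zero set at scale $\Delta$ which is $\zeta$-spreading with probability $p$ if there is a probability distribution $\mu$ over subsets $Z\subseteq Y$ such that for all $x,y\in Y$ with $d(x,y)\ge\Delta$, $\mu\{Z: y\in Z\text{ and } d(x,Z)\ge\Delta/\zeta\}\ge p$. $\zeta(Y;p)$ is the least $\zeta>0$ such that for every $\Delta>0$, $Y$ admits a random zero set at scale $\Delta$ which is $\zeta$-spreading with probability $p$. *)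

From HB Require Import structures.
From mathcomp Require Import all_boot all_order all_algebra.
From mathcomp Require Import boolp classical_sets reals constructive_ereal ereal.
Set Implicit Arguments. Unset Strict Implicit. Unset Printing Implicit Defensive.
Import Order.TTheory GRing.Theory Num.Theory.
Local Open Scope ring_scope.
Local Open Scope classical_set_scope.

Definition is_metric (R : realType) (T : finType) (d : T -> T -> R) : Prop :=
  [/\ forall x y, 0 <= d x y,
      forall x y, d x y = 0 <-> x = y,
      forall x y, d x y = d y x &
      forall x y z, d x z <= d x y + d y z].

Definition l2norm (R : realType) (n : nat) (v : 'rV[R]_n) : R :=
  Num.sqrt (\sum_(i < n) (v 0 i) ^+ 2).

Definition subset_distr (T : finType) (R : realType) (S : {set T})
    (mu : {ffun {set T} -> R}) : Prop :=
  [/\ forall Z : {set T}, 0 <= mu Z,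
      forall Z : {set T}, ~~ (Z \subset S) -> mu Z = 0 &
      \sum_(Z : {set T}) mu Z = 1].

(* S admits a random zero set at scale Delta which is zeta-spreading with
   probability p: mu{Z : y in Z and d(x,Z) >= Delta/zeta} >= p for all x,y in S
   with d(x,y) >= Delta.  Since y \in Z, Z is nonempty and
   d(x,Z) = min_{z in Z} d(x,z), so d(x,Z) >= r iff d(x,z) >= r for all z in Z. *)
Definition random_zero_set (R : realType) (T : finType) (d : T -> T -> R)
    (S : {set T}) (Delta zeta p : R) : Prop :=
  exists mu : {ffun {set T} -> R}, subset_distr S mu /\
    forall x y, x \in S -> y \in S -> Delta <= d x y ->
      p <= \sum_(Z : {set T} | (y \in Z) && [forall z in Z, Delta / zeta <= d x z])
             mu Z.

(* Taken as an
   infimum in the extended reals (+oo if no such zeta exists). *)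
Definition zeta_sp (R : realType) (T : finType) (d : T -> T -> R)
    (S : {set T}) (p : R) : \bar R :=
  ereal_inf [set (z%:E) | z in [set z : R | 0 < z /\
      forall Delta : R, 0 < Delta -> random_zero_set d S Delta z p]].

From HB Require Import structures.
From mathcomp Require Import all_boot all_order all_algebra.
From mathcomp Require Import boolp classical_sets reals constructive_ereal ereal.
Import Order.TTheory GRing.Theory Num.Theory.
Set Implicit Arguments. Unset Strict Implicit.
Local Open Scope ring_scope.

(* Given a random zero set mu at scale tau, map x to the vector
   (sqrt (mu Z) * min (L, d(x, Z)))_Z.  Every coordinate is 1-Lipschitz and the
   weights sum to 1, so the map is 1-Lipschitz.  If y is in Z and d(x, Z) >= L,
   the Z-coordinate contributes mu Z * L^2 to |phi x - phi y|^2, and the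
   spreading property makes these contributions add up to at least p L^2 when
   L = tau / zeta.  As zeta(S;p) is only an infimum, we use that d takes
   finitely many values: for admissible z close enough to zeta(S;p), the
   threshold tau / z cuts the distances exactly where tau / zeta(S;p) does.
   If zeta(S;p) = +oo, any 1-Lipschitz map separating the pairs at distance
   >= tau will do. *)

Lemma exists_gap_below (R : realDomainType) (U : finType) (f : U -> R) (c : R) :
  exists2 c', c' < c & forall u, c' < f u -> c <= f u.
Proof.
exists (\big[Num.max/(c - 1)]_(u | f u < c) f u).
  by apply: bigmax_lt => [|u //]; rewrite gtrBl.
move=> u; rewrite leNgt; apply: contraTN => fu_lt_c.
by rewrite -leNgt (le_bigmax_cond _ _ fu_lt_c).
Qed.

Section SetDistanceEmbedding.
Variables (R : realType) (T : finType) (d : T -> T -> R).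
Hypothesis hd : is_metric d.
Variable L : R.
Hypothesis L_ge0 : 0 <= L.

Definition trunc_setdist (Z : {set T}) (x : T) : R := \big[Num.min/L]_(z in Z) d x z.

Lemma trunc_setdist_ge0 Z x : 0 <= trunc_setdist Z x.
Proof. by case: hd => d_ge0 _ _ _; apply: le_bigmin. Qed.

Lemma trunc_setdist_le Z x y : trunc_setdist Z x <= trunc_setdist Z y + d x y.
Proof.
case: hd => d_ge0 _ _ d_triangle; rewrite -lerBlDr; apply: le_bigmin => [|z zZ].
  by rewrite lerBlDr (le_trans (bigmin_le_id _ _ _ _)) // lerDl.
by rewrite lerBlDl (le_trans (bigmin_le_cond _ _ zZ)).
Qed.

Lemma trunc_setdist_lipschitz Z x y :
  `|trunc_setdist Z x - trunc_setdist Z y| <= d x y.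
Proof.
case: hd => _ _ d_sym _; rewrite ler_distl trunc_setdist_le andbT lerBlDr.
by rewrite d_sym trunc_setdist_le.
Qed.

Lemma trunc_setdist_in (Z : {set T}) y : y \in Z -> trunc_setdist Z y = 0.
Proof.
case: hd => _ d_eq0 _ _ yZ; apply/eqP; rewrite eq_le trunc_setdist_ge0 andbT.
by rewrite -(proj2 (d_eq0 y y) erefl) bigmin_le_cond.
Qed.

Lemma trunc_setdist_far (Z : {set T}) x :
  (forall z, z \in Z -> L <= d x z) -> trunc_setdist Z x = L.
Proof. by move=> far; apply/eqP; rewrite eq_le bigmin_le_id; apply: le_bigmin. Qed.

Variables (I : finType) (w : I -> R) (Zs : I -> {set T}).
Hypothesis w_ge0 : forall i, 0 <= w i.

Definition setdist_embedding (x : T) : 'rV[R]_#|I| :=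
  \row_(k < #|I|) (Num.sqrt (w (enum_val k)) * trunc_setdist (Zs (enum_val k)) x).

Lemma l2norm_setdist_embedding x y :
  l2norm (setdist_embedding x - setdist_embedding y) =
  Num.sqrt (\sum_i w i * (trunc_setdist (Zs i) x - trunc_setdist (Zs i) y) ^+ 2).
Proof.
rewrite /l2norm [in RHS](eq_bigl (mem I)) // [in RHS]big_enum_val.
by congr Num.sqrt; apply: eq_bigr => k _; rewrite !mxE -mulrBr exprMn sqr_sqrtr.
Qed.

Lemma setdist_embedding_lipschitz x y :
  \sum_i w i <= 1 -> l2norm (setdist_embedding x - setdist_embedding y) <= d x y.
Proof.
have d_ge0 : 0 <= d x y by case: hd.
move=> w_sum_le1; rewrite l2norm_setdist_embedding -(ger0_norm d_ge0) -sqrtr_sqr.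
rewrite ler_sqrt ?sqr_ge0 // (@le_trans _ _ (\sum_i w i * d x y ^+ 2)) //.
  apply: ler_sum => i _; rewrite ler_wpM2l // -real_normK ?num_real //.
  by rewrite ler_sqr ?nnegrE // trunc_setdist_lipschitz.
by rewrite -mulr_suml ler_piMl ?sqr_ge0.
Qed.

Lemma setdist_embedding_far x y :
  Num.sqrt (\sum_(i | (y \in Zs i) && [forall z in Zs i, L <= d x z]) w i) * L
    <= l2norm (setdist_embedding x - setdist_embedding y).
Proof.
rewrite l2norm_setdist_embedding -[L in _ * L](ger0_norm L_ge0) -sqrtr_sqr.
have terms_ge0 i : 0 <= w i * (trunc_setdist (Zs i) x - trunc_setdist (Zs i) y) ^+ 2.
  by rewrite mulr_ge0 ?sqr_ge0.
rewrite -sqrtrM ?sumr_ge0 // ler_sqrt ?sumr_ge0 // mulr_suml.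
rewrite [leRHS](bigID (fun i => (y \in Zs i) && [forall z in Zs i, L <= d x z])) /=.
rewrite -[leLHS]addr0 lerD ?sumr_ge0 //.
apply: ler_sum => i /andP[y_in /forall_inP far].
by rewrite (trunc_setdist_in y_in) subr0 trunc_setdist_far.
Qed.

End SetDistanceEmbedding.

Section Embeddings.
Variables (R : realType) (T : finType) (d : T -> T -> R).
Hypothesis hd : is_metric d.

Lemma exists_separating_embedding tau : 0 < tau ->
  exists n (phi : T -> 'rV[R]_n), (forall x y, l2norm (phi x - phi y) <= d x y) /\
    forall x y, tau <= d x y -> 0 < l2norm (phi x - phi y).
Proof.
move=> tau_gt0; pose w (_ : T) : R := #|T|%:R^-1.
have w_ge0 u : 0 <= w u by rewrite invr_ge0.
exists #|T|, (setdist_embedding d tau w (fun u => [set u])); split => [x y|x y far].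
  apply: setdist_embedding_lipschitz => //.
  rewrite sumr_const -[_ *+ _]mulr_natr.
  have [->|T_neq0] := eqVneq #|T| 0%N; first by rewrite mulr0.
  by rewrite mulVf ?pnatr_eq0.
apply: lt_le_trans (setdist_embedding_far hd (ltW tau_gt0) _ w_ge0 x y).
rewrite mulr_gt0 // sqrtr_gt0 (bigD1 y) /=; last first.
  by rewrite set11; apply/forall_inP => z /set1P ->.
by rewrite ltr_pwDl ?sumr_ge0 // invr_gt0 ltr0n; apply/card_gt0P; exists y.
Qed.

Lemma random_zero_set_embedding (S : {set T}) (Delta zeta p L : R) : 0 <= L ->
  (forall x u, Delta / zeta <= d x u -> L <= d x u) ->
  random_zero_set d S Delta zeta p ->
  exists n (phi : T -> 'rV[R]_n), (forall x y, l2norm (phi x - phi y) <= d x y) /\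
    forall x y, x \in S -> y \in S -> Delta <= d x y ->
      Num.sqrt p * L <= l2norm (phi x - phi y).
Proof.
move=> L_ge0 threshold [mu [[mu_ge0 _ mu_sum1] spreading]].
exists #|{set T}|, (setdist_embedding d L mu id); split => [x y|x y xS yS Delta_le].
  by apply: setdist_embedding_lipschitz; rewrite ?mu_sum1.
apply: (le_trans _ (setdist_embedding_far hd L_ge0 id mu_ge0 x y)).
rewrite ler_wpM2r // ler_sqrt ?sumr_ge0 //.
apply: le_trans (spreading x y xS yS Delta_le) _.
rewrite [leLHS]big_mkcond [leRHS]big_mkcond; apply: ler_sum => Z _.
case: ifP => [/andP[-> /forall_inP far]|_]; last by case: ifP.
by rewrite ifT //; apply/forall_inP => z /far /threshold.
Qed.

End Embeddings.

Section SpreadingConstant.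
Variables (R : realType) (T : finType) (d : T -> T -> R).
Hypothesis hd : is_metric d.
Variables (S : {set T}) (p : R).

Definition spreading_zetas : set R :=
  [set z | 0 < z /\ forall Delta, 0 < Delta -> random_zero_set d S Delta z p]%classic.

Lemma zeta_sp_ge1 x y :
  x \in S -> y \in S -> x != y -> 0 < p -> (1%:E <= zeta_sp d S p)%E.
Proof.
move=> xS yS x_neq_y p_gt0; apply: le_ereal_inf_tmp => _ [z [z_gt0 zeta_z] <-].
have dxy_gt0 : 0 < d x y.
  case: hd => d_ge0 d_eq0 _ _; rewrite lt_def d_ge0 andbT.
  by apply: contra_neq x_neq_y => /d_eq0.
have [mu [_ spreading]] := zeta_z _ dxy_gt0.
rewrite lee_fin leNgt; apply/negP => z_lt1.
have := spreading x y xS yS (lexx _).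
rewrite big1 ?leNgt ?p_gt0 // => Z /andP[yZ /forall_inP far].
by have := far y yZ; rewrite ler_pdivrMr // leNgt gtr_pMr // z_lt1.
Qed.

Lemma zeta_sp_threshold r tau : 0 < r -> 0 < tau -> zeta_sp d S p = r%:E ->
  exists2 z, spreading_zetas z & forall x u, tau / z <= d x u -> tau / r <= d x u.
Proof.
move=> r_gt0 tau_gt0 zetaE.
have [m m_lt gap] := exists_gap_below (fun u : T * T => d u.1 u.2) (tau / r).
have [b r_lt_b b_ok] : exists2 b, r < b & forall z, 0 < z -> z < b -> m < tau / z.
  have [m_le0|m_gt0] := lerP m 0.
    exists (r + 1) => [|z z_gt0 _]; first by rewrite ltrDl.
    by rewrite (le_lt_trans m_le0) ?divr_gt0.
  by exists (tau / m) => [|z z_gt0 z_lt]; rewrite ltr_pdivlMr // mulrC -ltr_pdivlMr.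
have : (zeta_sp d S p < b%:E)%E by rewrite zetaE lte_fin.
move=> /ereal_inf_lt[_ [z zeta_z <-]]; rewrite lte_fin => z_lt_b.
exists z => // x u tau_z_le; apply: (gap (x, u)); apply: lt_le_trans tau_z_le.
exact: b_ok zeta_z.1 z_lt_b.
Qed.

End SpreadingConstant.

Theorem lemma3p5 (R : realType) (T : finType) (d : T -> T -> R)
  (hd : is_metric d) (S : {set T}) (p tau : R)
  (hp0 : 0 < p) (hp1 : p < 1) (htau : 0 < tau) :
  exists (n : nat) (phi : T -> 'rV[R]_n),
    (forall x y, l2norm (phi x - phi y) <= d x y) /\
    (forall x y, x \in S -> y \in S -> tau <= d x y ->
       ((tau * Num.sqrt p)%:E <= zeta_sp d S p * (l2norm (phi x - phi y))%:E)%E).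
Proof.
have [[x0 [y0 [x0S y0S tau_le]]]|no_pair] :=
  pselect (exists x0 y0, [/\ x0 \in S, y0 \in S & tau <= d x0 y0]); last first.
  exists 0%N, (fun _ => 0); split => [x y|x y xS yS tau_le].
    by rewrite /l2norm big_ord0 sqrtr0; case: hd.
  by exfalso; apply: no_pair; exists x, y.
have x0_neq_y0 : x0 != y0.
  apply: contraTneq tau_le => ->; case: hd => _ d_eq0 _ _.
  by rewrite (proj2 (d_eq0 _ _) erefl) -ltNge.
have := zeta_sp_ge1 hd x0S y0S x0_neq_y0 hp0.
case zetaE: (zeta_sp d S p) => [r| |] // r_ge1.
  have r_gt0 : 0 < r by rewrite lee_fin in r_ge1; exact: lt_le_trans ltr01 r_ge1.
  have [z [_ zeta_z] threshold] := zeta_sp_threshold r_gt0 htau zetaE.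
  have [n [phi [phi_lip phi_far]]] :=
    random_zero_set_embedding hd (ltW (divr_gt0 htau r_gt0)) threshold
      (zeta_z _ htau).
  exists n, phi; split => // x y xS yS tau_le_xy; rewrite -EFinM lee_fin.
  have := phi_far x y xS yS tau_le_xy.
  by rewrite mulrA ler_pdivrMr // mulrC [r * _]mulrC.
have [n [phi [phi_lip phi_sep]]] := exists_separating_embedding hd htau.
exists n, phi; split => // x y _ _ tau_le_xy.
by rewrite gt0_mulye ?lte_fin ?phi_sep ?leey.
Qed.
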